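(* Let $\Theta\subset\mathbb{R}^d$ be open and bounded, let $(X_{\mathcal D},\Pi_{\mathcal D},\nabla_{\mathcal D})$ be a gradient discretisation with piecewise constant reconstruction as described in the context, let $\delta t>0$, and let $\zeta:\mathbb{R}\to\mathbb{R}$ be non-decreasing and Lipschitz continuous with $\zeta(0)=0$ and $0\le\zeta'\le L_\zeta$ a.e. Let $L\ge L_\zeta/2$ and let $r\in L^2(\Theta)$ be a fixed function (in the scheme, $r=\Pi_{\mathcal D}u^{n-1}+f(\zeta(\Pi_{\mathcal D}u^{n-1}))\Delta^nW$ for a fixed realisation). Suppose $u^n\in X_{\mathcal D}$ satisfies $$\langle \Pi_{\mathcal D}u^n,\Pi_{\mathcal D}\varphi\rangle+\delta t\,\langle\nabla_{\mathcal D}\zeta(u^n),\nabla_{\mathcal D}\varphi\rangle=\langle r,\Pi_{\mathcal D}\varphi\rangle\quad\forall\varphi\in X_{\mathcal D}.$$ Let $u^{n,0}\in X_{\mathcal D}$ be arbitrary and define $(u^{n,i})_{i\ge1}\subset X_{\mathcal D}$ by: $u^{n,i}$ is the solution of $$\langle \Pi_{\mathcal D}u^{n,i},\Pi_{\mathcal D}\varphi\rangle+\delta t\,L\,\langle\nabla_{\mathcal D}u^{n,i},\nabla_{\mathcal D}\varphi\rangle=\delta t\,\langle L\nabla_{\mathcal D}u^{n,i-1}-\nabla_{\mathcal D}\zeta(u^{n,i-1}),\nabla_{\mathcal D}\varphi\rangle+\langle r,\Pi_{\mathcal D}\varphi\rangle\quad\forall\varphi\in X_{\mathcal D}.$$ Then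 $\|\Pi_{\mathcal D}u^{n,i}-\Pi_{\mathcal D}u^n\|_{*,\mathcal D}\to0$ as $i\to\infty$.
   Context: A gradient discretisation with piecewise constant reconstruction consists of: a finite-dimensional real vector space $X_{\mathcal D}$ with basis $(\mathbf e_j)_{j\in B}$ ($B$ a finite index set); a family of disjoint measurable subsets $(\Theta_j)_{j\in B}$ of $\Theta$ and the linear map $\Pi_{\mathcal D}:X_{\mathcal D}\to L^\infty(\Theta)$, $\Pi_{\mathcal D}v=\sum_{j\in B}v_j\mathbf 1_{\Theta_j}$ for $v=\sum_j v_j\mathbf e_j$; and a linear map $\nabla_{\mathcal D}:X_{\mathcal D}\to L^2(\Theta)^d$ such that $v\mapsto\|\nabla_{\mathcal D}v\|_{L^2(\Theta)}$ is a norm on $X_{\mathcal D}$. For $g:\mathbb{R}\to\mathbb{R}$ with $g(0)=0$ and $v=(v_j)_{j\in B}\in X_{\mathcal D}$, set $g(v):=(g(v_j))_{j\in B}\in X_{\mathcal D}$; then $\Pi_{\mathcal D}g(v)=g(\Pi_{\mathcal D}v)$. $\langle\cdot,\cdot\rangle$ denotes the $L^2(\Theta)$ (or $L^2(\Theta)^d$) inner product and $\|\cdot\|$ its norm. The discrete dual norm on $\Pi_{\mathcal D}(X_{\mathcal D})$ is $\|v\|_{*,\mathcal D}:=\sup\{\int_\Theta v\,\Pi_{\mathcal D}w\,dx: w\in X_{\mathcal D},\ \|\nabla_{\mathcal D}w\|=1\}$. *)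

From HB Require Import structures.
From mathcomp Require Import all_boot all_order all_algebra.
From mathcomp Require Import all_classical all_reals all_analysis.
Set Implicit Arguments. Unset Strict Implicit. Unset Printing Implicit Defensive.
Import Order.TTheory GRing.Theory Num.Theory.
Import numFieldNormedType.Exports.
Local Open Scope classical_set_scope.
Local Open Scope ring_scope.

Definition Rd (R : realType) (d : nat) : measurableType _ :=
  g_sigma_algebraType (@open 'rV[R]_d).

Definition box (R : realType) (d : nat) (a b : 'rV[R]_d) : set (Rd R d) :=
  [set x : 'rV[R]_d | forall i, a 0 i <= x 0 i <= b 0 i].

(* mu is the d-dimensional Lebesgue measure (on Borel sets): the (unique)
   Borel measure giving every closed box its volume. *)
Definition is_lebesgue (R : realType) (d : nat)
    (mu : {measure set Rd R d -> \bar R}) : Prop :=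
  forall a b : 'rV[R]_d, (forall i, a 0 i <= b 0 i) ->
    mu (box a b) = (\prod_(i < d) (b 0 i - a 0 i))%:E.

Section GD.
Variables (R : realType) (d : nat) (mu : {measure set Rd R d -> \bar R})
  (Theta : set (Rd R d)).

Definition L2 (f : Rd R d -> R) : Prop :=
  measurable_fun Theta f /\ mu.-integrable Theta (fun x => (f x ^+ 2)%:E).

Definition L2vec (F : Rd R d -> 'rV[R]_d) : Prop :=
  forall i, L2 (fun x => F x 0 i).

Definition ip (f g : Rd R d -> R) : R := \int[mu]_(x in Theta) (f x * g x).
Definition ipvec (F G : Rd R d -> 'rV[R]_d) : R :=
  \int[mu]_(x in Theta) (\sum_(i < d) F x 0 i * G x 0 i).
Definition normvec (F : Rd R d -> 'rV[R]_d) : R := Num.sqrt (ipvec F F).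

Variables (B : finType) (ThetaB : B -> set (Rd R d))
  (gradB : B -> Rd R d -> 'rV[R]_d).

(* X_D = functions B -> R (coordinates in the basis (e_j)_{j in B}) *)
Definition PiD (v : B -> R) : Rd R d -> R :=
  fun x => \sum_(j : B) v j * \1_(ThetaB j) x.

(* nabla_D: the linear map determined by the images gradB j of the basis *)
Definition gradD (v : B -> R) : Rd R d -> 'rV[R]_d :=
  fun x => \sum_(j : B) v j *: gradB j x.

Definition mapX (g : R -> R) (v : B -> R) : B -> R := fun j => g (v j).

Definition dual_normD (v : Rd R d -> R) : R :=
  sup [set ip v (PiD w) | w in [set w : B -> R | normvec (gradD w) = 1]].

End GD.

(* Put e_i = u^{n,i} - u^n and c_i = L (u^{n,i+1} - u^{n,i}) + zeta(u^{n,i})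
   - zeta(u^n).  Subtracting the scheme from the iteration gives
   <Pi e_{i+1}, Pi phi> = - dt <grad c_i, grad phi> for every phi.  As zeta is
   non-decreasing and L_zeta-Lipschitz with L >= L_zeta / 2, on every cell
   (L/2) (e_{i+1}^2 - e_i^2) <= e_{i+1} c_i, so testing with phi = c_i gives
   dt ||grad c_i||^2 <= E_i - E_{i+1} for the energy E_i = (L/2) ||Pi e_i||^2.
   Hence ||grad c_i|| -> 0, and by Cauchy-Schwarz the dual norm of Pi e_{i+1}
   is at most dt ||grad c_i||. *)

From HB Require Import structures.
From mathcomp Require Import all_boot all_order all_algebra.
From mathcomp Require Import all_classical all_reals all_analysis.
From mathcomp Require Import measurable_realfun ring lra.
Set Implicit Arguments. Unset Strict Implicit. Unset Printing Implicit Defensive.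
Import Order.TTheory GRing.Theory Num.Theory.
Import numFieldNormedType.Exports.
Local Open Scope classical_set_scope.
Local Open Scope ring_scope.

Section BorelRd.
Variables (R : realType) (d : nat).

Lemma open_measurable_Rd (A : set (Rd R d)) :
  open (A : set 'rV[R]_d) -> measurable A.
Proof. exact: sub_sigma_algebra. Qed.

Lemma closed_measurable_Rd (A : set (Rd R d)) :
  closed (A : set 'rV[R]_d) -> measurable A.
Proof.
move=> cA; rewrite -(setCK A); apply: measurableC; apply: open_measurable_Rd.
exact: closed_openC.
Qed.

Lemma closed_box (a b : 'rV[R]_d) : closed (box a b : set 'rV[R]_d).
Proof.
have -> : (box a b : set 'rV[R]_d) = \bigcap_(i in [set: 'I_d])
    ((fun M : 'rV[R]_d => M 0 i) @^-1` [set y | a 0 i <= y] `&`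
     (fun M : 'rV[R]_d => M 0 i) @^-1` [set y | y <= b 0 i]).
  apply/seteqP; split => x /=; first by move=> abx i _; have /andP[] := abx i.
  by move=> abx i; have [/= -> ->] := abx i I.
apply: closed_bigI => i _; apply: closedI; apply: preimage_closed;
  by [move=> ? _; exact: coord_continuous | exact: closed_ge | exact: closed_le].
Qed.

Lemma mx_coord_le_norm (v : 'rV[R]_d) i : `|v 0 i| <= `|v|.
Proof.
have /mapP[j _ ->] : `|v 0 i| \in [seq `|v x.1 x.2| | x : 'I_1 * 'I_d].
  by apply/mapP; exists (0, i); rewrite ?mem_enum.
by rewrite [leRHS]/Num.norm /= mx_normrE; apply/bigmax_geP; right; exists j.
Qed.

Lemma is_lebesgue_bounded_lty (mu : {measure set Rd R d -> \bar R})
    (A : set (Rd R d)) :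
  is_lebesgue mu -> measurable A -> bounded_set (A : set 'rV[R]_d) ->
  (mu A < +oo)%E.
Proof.
move=> leb mA [M [Mreal AM]].
pose c : R := `|M| + 1.
have c0 : 0 <= c by rewrite addr_ge0.
have Mc : M < c by rewrite (le_lt_trans (real_ler_norm Mreal)) // ltrDl.
have A_box : A `<=` box (const_mx (- c)) (const_mx c).
  move=> v /(AM c Mc) /= vc i.
  by rewrite !mxE -ler_norml (le_trans (mx_coord_le_norm v i)).
have mbox := closed_measurable_Rd (@closed_box (const_mx (- c)) (const_mx c)).
rewrite (le_lt_trans (le_measure _ _ _ A_box)) ?inE //.
have box_fin : (mu (box (const_mx (- c)%R) (const_mx c)) < +oo)%E.
  by rewrite leb ?ltry // => i; rewrite !mxE (le_trans _ c0) // oppr_le0.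
exact: box_fin.
Qed.

End BorelRd.

Section RealIntegrable.
Context dT (T : measurableType dT) (R : realType) (mu : {measure set T -> \bar R}).
Variables (D : set T) (mD : measurable D).

Lemma integrable_EFin_sum I (s : seq I) (h : I -> T -> R) :
  (forall i, mu.-integrable D (EFin \o h i)) ->
  mu.-integrable D (EFin \o fun x => \sum_(i <- s) h i x).
Proof.
move=> hi; apply: (eq_integrable mD (fun x => \sum_(i <- s) (h i x)%:E)%E).
  by move=> x _; rewrite sumEFin.
by apply: integrable_sum => // i _; exact: hi.
Qed.

Lemma Rintegral_sum I (s : seq I) (h : I -> T -> R) :
  (forall i, mu.-integrable D (EFin \o h i)) ->
  \int[mu]_(x in D) (\sum_(i <- s) h i x) = \sum_(i <- s) \int[mu]_(x in D) h i x.
Proof.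
move=> hi; rewrite /Rintegral; under eq_integral do rewrite -sumEFin.
rewrite integral_sum // -EFin_sum_fine // => i _.
by have := integrable_fin_num mD (hi i).
Qed.

Lemma integrable_EFinZl (f : T -> R) c :
  mu.-integrable D (EFin \o f) -> mu.-integrable D (EFin \o fun x => c * f x).
Proof. exact: integrableZl. Qed.

Lemma integrable_mul_sq (f g : T -> R) :
  measurable_fun D f -> mu.-integrable D (fun x => (f x ^+ 2)%:E) ->
  measurable_fun D g -> mu.-integrable D (fun x => (g x ^+ 2)%:E) ->
  mu.-integrable D (EFin \o fun x => f x * g x).
Proof.
move=> mf if2 mg ig2.
apply: (le_integrable mD _ _ (integrableD mD if2 ig2)).
  exact/measurable_EFinP/measurable_funM.
move=> x _ /=; rewrite lee_fin normrM [leRHS]ger0_norm ?addr_ge0 ?sqr_ge0 //.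
have := sqr_ge0 (`|f x| - `|g x|).
rewrite sqrrB !real_normK ?num_real //; nra.
Qed.

End RealIntegrable.

Section FiniteForms.
Variables (R : realFieldType) (B : finType).
Implicit Types (m : B -> R) (A : B -> B -> R) (v w z : B -> R).

Definition diag_form m v w := \sum_j v j * w j * m j.
Definition bilin_form A v w := \sum_j \sum_k v j * w k * A j k.

Lemma diag_formBl m v w z :
  diag_form m (fun j => v j - w j) z = diag_form m v z - diag_form m w z.
Proof. by rewrite /diag_form -sumrB; apply: eq_bigr => j _; rewrite !mulrBl. Qed.

Lemma diag_form_ge0 m v : (forall j, 0 <= m j) -> 0 <= diag_form m v v.
Proof.
by move=> m_ge0; apply: sumr_ge0 => j _; rewrite mulr_ge0 // -expr2 sqr_ge0.
Qed.

Lemma bilin_formDl A v w z :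
  bilin_form A (fun j => v j + w j) z = bilin_form A v z + bilin_form A w z.
Proof.
rewrite /bilin_form -big_split; apply: eq_bigr => j _ /=.
by rewrite -big_split; apply: eq_bigr => k _ /=; rewrite !mulrDl.
Qed.

Lemma bilin_formBl A v w z :
  bilin_form A (fun j => v j - w j) z = bilin_form A v z - bilin_form A w z.
Proof.
rewrite /bilin_form -sumrB; apply: eq_bigr => j _.
by rewrite -sumrB; apply: eq_bigr => k _; rewrite !mulrBl.
Qed.

Lemma bilin_formZl A c v z :
  bilin_form A (fun j => c * v j) z = c * bilin_form A v z.
Proof.
rewrite /bilin_form mulr_sumr; apply: eq_bigr => j _.
by rewrite mulr_sumr; apply: eq_bigr => k _; rewrite !mulrA.
Qed.

Lemma bilin_form_CauchySchwarz A g w :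
  (forall j k, A j k = A k j) -> (forall v, 0 <= bilin_form A v v) ->
  bilin_form A w w = 1 -> bilin_form A g w ^+ 2 <= bilin_form A g g.
Proof.
move=> A_sym A_psd w1; set c := bilin_form A g w.
have expand : bilin_form A (fun j => g j - c * w j) (fun j => g j - c * w j) =
    bilin_form A g g - c * bilin_form A g w - c * bilin_form A w g
    + c ^+ 2 * bilin_form A w w.
  rewrite /bilin_form !mulr_sumr -!sumrB -!big_split /=; apply: eq_bigr => j _.
  by rewrite !mulr_sumr -!sumrB -!big_split /=; apply: eq_bigr => k _; ring.
have wgC : bilin_form A w g = c.
  rewrite /c /bilin_form exchange_big /=; apply: eq_bigr => j _.
  by apply: eq_bigr => k _; rewrite A_sym; ring.
by have := A_psd (fun j => g j - c * w j); rewrite expand wgC w1 -/c; nra.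
Qed.

End FiniteForms.

Section GradientDiscretisation.
Variables (R : realType) (d : nat) (mu : {measure set Rd R d -> \bar R})
  (Theta : set (Rd R d)) (B : finType) (ThetaB : B -> set (Rd R d))
  (gradB : B -> Rd R d -> 'rV[R]_d).
Hypothesis mTheta : measurable Theta.

Definition cell_mass j := \int[mu]_(x in Theta) \1_(ThetaB j) x.
Definition stiffness j k := ipvec mu Theta (gradB j) (gradB k).

Lemma cell_mass_ge0 j : 0 <= cell_mass j.
Proof. exact: Rintegral_ge0. Qed.

Lemma stiffnessC j k : stiffness j k = stiffness k j.
Proof.
by apply: eq_Rintegral => x _; apply: eq_bigr => i _; rewrite mulrC.
Qed.

Lemma PiDB v w :
  (fun x => PiD ThetaB v x - PiD ThetaB w x) = PiD ThetaB (fun j => v j - w j).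
Proof.
by apply/funext => x; rewrite /PiD -sumrB; apply: eq_bigr => j _; rewrite mulrBl.
Qed.

Lemma gradDZB c v w :
  (fun x => c *: gradD gradB v x - gradD gradB w x) =
  gradD gradB (fun j => c * v j - w j).
Proof.
apply/funext => x; rewrite /gradD scaler_sumr -sumrB; apply: eq_bigr => j _.
by rewrite scalerA scalerBl.
Qed.

Section Reconstruction.
Hypothesis mThetaB : forall j, measurable (ThetaB j).
Hypothesis ThetaB_disj : forall j k, j != k -> ThetaB j `&` ThetaB k = set0.
Hypothesis Theta_lty : (mu Theta < +oo)%E.

Lemma integrable_cell j : mu.-integrable Theta (EFin \o \1_(ThetaB j)).
Proof.
apply/integrableP; split; first exact/measurable_EFinP/measurable_indic.
under eq_integral do rewrite /= ger0_norm //.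
rewrite integral_indic // (le_lt_trans _ Theta_lty) // le_measure ?inE //.
exact: measurableI.
Qed.

Lemma PiD_mul v w x :
  PiD ThetaB v x * PiD ThetaB w x = \sum_j v j * w j * \1_(ThetaB j) x.
Proof.
rewrite /PiD mulr_suml; apply: eq_bigr => j _.
rewrite mulr_sumr (bigD1 j) //= big1 ?addr0 => [|k kj].
  by rewrite !indicE; case: (x \in ThetaB j); rewrite ?mulr0 ?mulr1.
rewrite !indicE.
have [xj|_] := boolP (x \in ThetaB j); last by rewrite mulr0n mulr0 mul0r.
have [xk|_] := boolP (x \in ThetaB k); last by rewrite mulr0n !mulr0.
have : (ThetaB k `&` ThetaB j) x by split; exact/set_mem.
by rewrite ThetaB_disj.
Qed.

Lemma ip_PiD v w :
  ip mu Theta (PiD ThetaB v) (PiD ThetaB w) = diag_form cell_mass v w.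
Proof.
rewrite /ip; under eq_Rintegral do rewrite PiD_mul.
rewrite Rintegral_sum // => [|j]; last exact: integrable_EFinZl (integrable_cell j).
by apply: eq_bigr => j _; rewrite RintegralZl //; exact: integrable_cell.
Qed.

End Reconstruction.

Section Gradient.
Hypothesis gradB_L2 : forall j, L2vec mu Theta (gradB j).

Lemma integrable_gradB_dot j k :
  mu.-integrable Theta (EFin \o fun x => \sum_(i < d) gradB j x 0 i * gradB k x 0 i).
Proof.
apply: integrable_EFin_sum => // i.
have [mj ij] := gradB_L2 j i; have [mk ik] := gradB_L2 k i.
exact: integrable_mul_sq.
Qed.

Lemma gradD_dot v w x :
  \sum_(i < d) gradD gradB v x 0 i * gradD gradB w x 0 i =
  \sum_j \sum_k v j * w k * \sum_(i < d) gradB j x 0 i * gradB k x 0 i.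
Proof.
have gradD_entry z i : gradD gradB z x 0 i = \sum_j z j * gradB j x 0 i.
  by rewrite /gradD summxE; apply: eq_bigr => j _; rewrite mxE.
under eq_bigr do rewrite !gradD_entry big_distrl /=.
under eq_bigr do under eq_bigr do rewrite big_distrr /=.
rewrite exchange_big /=; apply: eq_bigr => j _.
rewrite exchange_big /=; apply: eq_bigr => k _.
by rewrite big_distrr /=; apply: eq_bigr => i _; rewrite mulrACA.
Qed.

Lemma ipvec_gradD v w :
  ipvec mu Theta (gradD gradB v) (gradD gradB w) = bilin_form stiffness v w.
Proof.
have integrable_vw j k : mu.-integrable Theta (EFin \o fun x =>
    v j * w k * \sum_(i < d) gradB j x 0 i * gradB k x 0 i).
  exact/integrable_EFinZl/integrable_gradB_dot.
rewrite /ipvec; under eq_Rintegral do rewrite gradD_dot.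
rewrite Rintegral_sum // => [|j]; last exact: integrable_EFin_sum.
apply: eq_bigr => j _; rewrite Rintegral_sum //; apply: eq_bigr => k _.
by rewrite RintegralZl //; exact: integrable_gradB_dot.
Qed.

Lemma stiffness_psd v : 0 <= bilin_form stiffness v v.
Proof.
rewrite -ipvec_gradD; apply: Rintegral_ge0 => x _.
by apply: sumr_ge0 => i _; rewrite -expr2 sqr_ge0.
Qed.

End Gradient.
End GradientDiscretisation.

Lemma homo_mul_subr_ge0 (R : realDomainType) (f : R -> R) :
  {homo f : x y / x <= y} -> forall x y, 0 <= (f x - f y) * (x - y).
Proof.
move=> f_homo x y; have [xy|yx] := leP x y.
  by apply: mulr_le0; rewrite subr_le0 //; exact: f_homo.
by apply: mulr_ge0; rewrite subr_ge0; [apply: f_homo|]; exact: ltW.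
Qed.

(* Used with [w = zeta x - zeta y] and [b = x - y]; the bound
   [w ^+ 2 <= 2 * L * (w * b)] is what absorbs the cross term [w * (a - b)]. *)
Lemma relaxation_step_ineq (R : realFieldType) (Lz L a b w : R) :
  0 <= Lz -> Lz / 2 <= L -> 0 <= w * b -> `|w| <= Lz * `|b| ->
  L / 2 * (a ^+ 2 - b ^+ 2) <= a * (L * (a - b) + w).
Proof.
move=> Lz_ge0 LzL wb_ge0 w_le.
have w2_le : w ^+ 2 <= 2 * L * (w * b).
  have : w ^+ 2 <= Lz * (w * b).
    rewrite -[w ^+ 2]real_normK ?num_real // -[w * b]ger0_norm // normrM.
    by have := normr_ge0 w; have := normr_ge0 b; nra.
  by move/le_trans; apply; apply: ler_wpM2r => //; lra.
rewrite -subr_ge0.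
have -> : a * (L * (a - b) + w) - L / 2 * (a ^+ 2 - b ^+ 2) =
    L / 2 * (a - b) ^+ 2 + w * (a - b) + w * b by field.
have [L_gt0|] := ltrP 0 L.
  rewrite -(pmulr_rge0 _ (mulr_gt0 (ltr0Sn _ 1) L_gt0)).
  have -> : 2 * L * (L / 2 * (a - b) ^+ 2 + w * (a - b) + w * b) =
      (L * (a - b) + w) ^+ 2 + (2 * L * (w * b) - w ^+ 2) by field.
  by rewrite addr_ge0 ?sqr_ge0 ?subr_ge0.
move=> L_le0; have L0 : L = 0 by lra.
have w0 : w = 0 by apply/eqP; rewrite -sqrf_eq0 eq_le sqr_ge0 andbT; nra.
by rewrite L0 w0; lra.
Qed.

Lemma cvg0_telescoping (R : realType) (q S : nat -> R) (c : R) : 0 < c ->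
  (forall i, 0 <= q i) -> (forall i, 0 <= S i) ->
  (forall i, c * q i <= S i - S i.+1) -> q @ \oo --> 0.
Proof.
move=> c_gt0 q_ge0 S_ge0 decay.
have S_noninc : nonincreasing_seq S.
  apply/nonincreasing_seqP => n; rewrite -subr_ge0.
  exact: le_trans (mulr_ge0 (ltW c_gt0) (q_ge0 n)) (decay n).
have S_cvg : cvgn S.
  by apply: nonincreasing_is_cvgn S_noninc _; exists 0 => _ [n _ <-].
have dS_cvg0 : (fun i => S i - S i.+1) @ \oo --> 0.
  have S1_cvg : (fun i => S i.+1) @ \oo --> limn S by rewrite cvg_shiftS.
  by rewrite -(subrr (limn S)); apply: cvgB.
have dS_scaled_cvg0 : (fun i => c^-1 * (S i - S i.+1)) @ \oo --> 0.
  by rewrite -(mulr0 c^-1); apply: cvgM => //; exact: cvg_cst.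
apply: (squeeze_cvgr _ (cvg_cst 0) dS_scaled_cvg0); near=> i.
by rewrite q_ge0 /= ler_pdivlMl.
Unshelve. all: by end_near.
Qed.

Lemma sup_norm_le (R : realType) (E : set R) b : 0 <= b ->
  (forall y, E y -> `|y| <= b) -> `|sup E| <= b.
Proof.
move=> b_ge0 Eb; have [[y Ey]|E0] := pselect (E !=set0); last first.
  have -> : E = set0 by apply/seteqP; split => // z Ez; apply: E0; exists z.
  by rewrite sup0 normr0.
have E_le z : E z -> z <= b by move/Eb; rewrite ler_norml => /andP[].
rewrite ler_norml; apply/andP; split; last by apply: ge_sup; [exists y|].
have := Eb y Ey; rewrite ler_norml => /andP[/le_trans + _]; apply.
by apply: ub_le_sup => //; exists b.
Qed.

Section Relaxation.
Variables (R : realType) (B : finType) (m : B -> R) (A : B -> B -> R).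
Hypothesis m_ge0 : forall j, 0 <= m j.
Hypothesis A_sym : forall j k, A j k = A k j.
Hypothesis A_psd : forall v, 0 <= bilin_form A v v.

Variables (dt Lz L : R) (zeta : R -> R) (rhs : (B -> R) -> R).
Variables (un : B -> R) (u : nat -> B -> R).
Hypothesis dt_gt0 : 0 < dt.
Hypothesis zeta_homo : {homo zeta : x y / x <= y}.
Hypothesis Lz_ge0 : 0 <= Lz.
Hypothesis zeta_lip : forall x y, `|zeta x - zeta y| <= Lz * `|x - y|.
Hypothesis LzL : Lz / 2 <= L.
Hypothesis scheme : forall phi,
  diag_form m un phi + dt * bilin_form A (mapX zeta un) phi = rhs phi.
Hypothesis iteration : forall i phi,
  diag_form m (u i.+1) phi + dt * L * bilin_form A (u i.+1) phi =
  dt * bilin_form A (fun j => L * u i j - mapX zeta (u i) j) phi + rhs phi.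

Let L_ge0 : 0 <= L.
Proof. exact: le_trans (divr_ge0 Lz_ge0 (ler0n _ 2)) LzL. Qed.

Let err i j := u i j - un j.
Let corr i j := L * (u i.+1 j - u i j) + (mapX zeta (u i) j - mapX zeta un j).
Let energy i := L / 2 * diag_form m (err i) (err i).

Lemma err_corr_eq i phi :
  diag_form m (err i.+1) phi = - dt * bilin_form A (corr i) phi.
Proof.
have := scheme phi; have := iteration i phi.
rewrite /err /corr diag_formBl !(bilin_formBl, bilin_formDl, bilin_formZl).
lra.
Qed.

Lemma energy_ge0 i : 0 <= energy i.
Proof. exact: mulr_ge0 (divr_ge0 L_ge0 (ler0n _ 2)) (diag_form_ge0 _ m_ge0). Qed.

Lemma energy_decay i : dt * bilin_form A (corr i) (corr i) <= energy i - energy i.+1.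
Proof.
have energy_step : energy i.+1 - energy i <= diag_form m (err i.+1) (corr i).
  rewrite /energy -mulrBr /diag_form -sumrB mulr_sumr; apply: ler_sum => j _.
  have step := relaxation_step_ineq (err i.+1 j) Lz_ge0 LzL
    (homo_mul_subr_ge0 zeta_homo (u i j) (un j)) (zeta_lip (u i j) (un j)).
  have err_diff : err i.+1 j - err i j = u i.+1 j - u i j by rewrite /err; lra.
  rewrite err_diff /err /corr /mapX in step *.
  by have := m_ge0 j; nra.
by move: energy_step; rewrite err_corr_eq; lra.
Qed.

Lemma corr_cvg0 : (fun i => bilin_form A (corr i) (corr i)) @ \oo --> 0.
Proof. exact: cvg0_telescoping dt_gt0 (fun i => A_psd _) energy_ge0 energy_decay. Qed.

Lemma err_dual_bound i w : bilin_form A w w = 1 ->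
  `|diag_form m (err i.+1) w| <= dt * Num.sqrt (bilin_form A (corr i) (corr i)).
Proof.
move=> w1; rewrite err_corr_eq normrM normrN (gtr0_norm dt_gt0) ler_pM2l //.
by rewrite -sqrtr_sqr ler_wsqrtr // bilin_form_CauchySchwarz.
Qed.

Theorem relaxation_cvg : exists b : nat -> R,
  [/\ b @ \oo --> 0, forall i, 0 <= b i &
      forall i w, bilin_form A w w = 1 ->
        `|diag_form m (fun j => u i.+1 j - un j) w| <= b i].
Proof.
exists (fun i => dt * Num.sqrt (bilin_form A (corr i) (corr i))); split.
- rewrite -(mulr0 dt) -sqrtr0; apply: cvgM; first exact: cvg_cst.
  exact: continuous_cvg (@sqrt_continuous R 0) corr_cvg0.
- by move=> i; rewrite mulr_ge0 ?sqrtr_ge0 // ltW.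
- exact: err_dual_bound.
Qed.

End Relaxation.

Theorem mainTheorem1 (R : realType) (d : nat)
  (mu : {measure set Rd R d -> \bar R}) (Theta : set (Rd R d))
  (B : finType) (ThetaB : B -> set (Rd R d))
  (gradB : B -> Rd R d -> 'rV[R]_d)
  (dt : R) (zeta : R -> R) (Lz L : R) (r : Rd R d -> R)
  (un : B -> R) (u : nat -> B -> R) :
  is_lebesgue mu ->
  open (Theta : set 'rV[R]_d) -> bounded_set (Theta : set 'rV[R]_d) ->
  (* gradient discretisation with piecewise constant reconstruction *)
  (forall j, measurable (ThetaB j)) ->
  (forall j, ThetaB j `<=` Theta) ->
  (forall j k, j != k -> ThetaB j `&` ThetaB k = set0) ->
  (forall j, L2vec mu Theta (gradB j)) ->
  (forall v : B -> R, normvec mu Theta (gradD gradB v) = 0 -> v = (fun _ => 0)) ->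
  (* time step and nonlinearity *)
  0 < dt ->
  {homo zeta : x y / x <= y} ->
  zeta 0 = 0 ->
  0 <= Lz ->
  (forall x y, `|zeta x - zeta y| <= Lz * `|x - y|) ->
  Lz / 2 <= L ->
  L2 mu Theta r ->
  (* u^n solves the nonlinear scheme *)
  (forall phi : B -> R,
     ip mu Theta (PiD ThetaB un) (PiD ThetaB phi)
     + dt * ipvec mu Theta (gradD gradB (mapX zeta un)) (gradD gradB phi)
     = ip mu Theta r (PiD ThetaB phi)) ->
  (* the linearised iteration *)
  (forall (i : nat) (phi : B -> R),
     ip mu Theta (PiD ThetaB (u i.+1)) (PiD ThetaB phi)
     + dt * L * ipvec mu Theta (gradD gradB (u i.+1)) (gradD gradB phi)
     = dt * ipvec mu Theta
              (fun x => L *: gradD gradB (u i) x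
                        - gradD gradB (mapX zeta (u i)) x)
              (gradD gradB phi)
       + ip mu Theta r (PiD ThetaB phi)) ->
  (fun i => dual_normD mu Theta ThetaB gradB
              (fun x => PiD ThetaB (u i) x - PiD ThetaB un x)) @ \oo --> 0.
Proof.
(* The iterates are given. *)
move=> leb oTheta bTheta mThetaB _ ThetaB_disj gradB_L2 _ dt_gt0 zeta_homo _
  Lz_ge0 zeta_lip LzL _ scheme iteration.
have mTheta : measurable Theta := open_measurable_Rd oTheta.
have Theta_lty := is_lebesgue_bounded_lty leb mTheta bTheta.
have ipE := ip_PiD mTheta mThetaB ThetaB_disj Theta_lty.
have ipvecE := ipvec_gradD mTheta gradB_L2.
have [phi|i phi|b [b_cvg0 b_ge0 b_bound]] := @relaxation_cvg R B _ _
  (@cell_mass_ge0 _ _ mu Theta _ ThetaB) (@stiffnessC _ _ mu Theta _ gradB)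
  (stiffness_psd mTheta gradB_L2) dt Lz L zeta
  (fun phi => ip mu Theta r (PiD ThetaB phi)) un u
  dt_gt0 zeta_homo Lz_ge0 zeta_lip LzL.
- by rewrite -ipE -ipvecE scheme.
- by rewrite -ipE -!ipvecE -gradDZB iteration.
have mb_cvg0 : (fun i => - b i) @ \oo --> 0 by rewrite -oppr0; exact: cvgN.
rewrite -cvg_shiftS; apply: (squeeze_cvgr _ mb_cvg0 b_cvg0); near=> i.
rewrite -ler_norml /dual_normD; apply: sup_norm_le => // _ [w /= w1 <-].
rewrite PiDB ipE; apply: b_bound; rewrite -ipvecE.
rewrite -[LHS]sqr_sqrtr; first by rewrite [Num.sqrt _]w1 expr1n.
by rewrite ipvecE; exact: stiffness_psd.
Unshelve. all: by end_near.
Qed.
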